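(* Let $p\ge0$ be an integer and $0<x<2\pi$. Then $$\sum_{k=1}^\infty\frac{\cos(kx)}{(2k-1)(2k)^{2p}(2k+1)}=\frac12-\frac{\pi}{4}\sin\frac x2-\frac12\sum_{j=1}^p\frac{(-1)^{j+1}\pi^{2j}}{(2j)!}B_{2j}\Big(\frac{x}{2\pi}\Big),$$ $$\sum_{k=1}^\infty\frac{\sin(kx)}{(2k-1)(2k)^{2p+1}(2k+1)}=\frac{\pi}{4}\cos\frac x2-\frac14(\pi-x)-\frac12\sum_{j=1}^p\frac{(-1)^{j+1}\pi^{2j+1}}{(2j+1)!}B_{2j+1}\Big(\frac{x}{2\pi}\Big).$$
   Context: $B_n(y)$ are the Bernoulli polynomials, defined by $\frac{te^{yt}}{e^t-1}=\sum_{k\ge0}B_k(y)\frac{t^k}{k!}$. *)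

From Stdlib Require Import Reals.
From Coquelicot Require Import Coquelicot.
Open Scope R_scope.

Definition bernoulli_gf (y : R) (t : R) : R :=
  if Req_EM_T t 0 then 1 else t * exp (y * t) / (exp t - 1).

(* B_n(y) : the coefficient of t^n/n! in the Taylor expansion at 0 of the
   generating function, i.e. its n-th derivative at t = 0. *)
Definition Bernoulli (n : nat) (y : R) : R := Derive_n (bernoulli_gf y) n 0.

(* The two families of series are, up to a factor 1/2, termwise derivatives of
   each other: the derivative of the sine series of level p is half the cosine
   series of level p, and that of the cosine series of level p+1 is minus half
   the sine series of level p.  Since B_(n+1)' = (n+1) B_n, the closed forms
   satisfy the same relations.  All terms are dominated by 1/(4k^2-1), so the
   partial sums and their derivatives converge uniformly and each identity
   yields the next one up to an affine function, which is zero because the sine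
   series and its closed form are continuous and vanish at 0 and 2 PI (there
   B_(2j+1)(0) = B_(2j+1)(1) = 0).

   The induction starts from sum cos(kx)/(4k^2-1) = 1/2 - (PI/4) sin(x/2).  The
   error u of the N-th partial sum solves u'' + u/4 = -sin((N+3/2)x)/(8 sin(x/2))
   (Dirichlet kernel), and variation of parameters bounds |u(x)| by
   |u(PI)| + O(1/N); finally u(PI) -> 0 by Leibniz's series for PI/4.

   The Bernoulli polynomials are handled through the power series of t/(e^t-1)
   and e^(yt), whose Cauchy product has coefficients B_n(y)/n!. *)

From Stdlib Require Import Reals Factorial Lra Lia.
From Coquelicot Require Import Coquelicot.
Open Scope R_scope.

Lemma is_series_lim_seq (a : nat -> R) l : is_series a l <-> is_lim_seq (sum_n a) l.
Proof. reflexivity. Qed.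

(* Coquelicot lemmas specialised to functions [R -> R]: the equations they
   produce are then between reals, so that [ring] and [field] apply. *)
Lemma is_derive_ext_R (f g : R -> R) (x l : R) :
  (forall t, f t = g t) -> is_derive f x l -> is_derive g x l.
Proof. apply is_derive_ext. Qed.

Lemma is_derive_eq_R (f : R -> R) (x l l' : R) : is_derive f x l -> l = l' -> is_derive f x l'.
Proof. now intros H <-. Qed.

Lemma is_derive_Rplus (f g : R -> R) (x df dg : R) :
  is_derive f x df -> is_derive g x dg -> is_derive (fun x => f x + g x) x (df + dg).
Proof. exact (is_derive_plus f g x df dg). Qed.

Lemma is_derive_Rminus (f g : R -> R) (x df dg : R) :
  is_derive f x df -> is_derive g x dg -> is_derive (fun x => f x - g x) x (df - dg).
Proof. exact (is_derive_minus f g x df dg). Qed.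

Lemma is_derive_const_R (c x : R) : is_derive (fun _ => c) x 0.
Proof. apply is_derive_Reals, derivable_pt_lim_const. Qed.

Lemma continuity_pt_of_is_derive (f : R -> R) (x l : R) : is_derive f x l -> continuity_pt f x.
Proof.
  intro H. apply derivable_continuous_pt. exists l. now apply is_derive_Reals.
Qed.

Lemma sum_n_ext_R (a b : nat -> R) N : (forall n, a n = b n) -> sum_n a N = sum_n b N.
Proof. intro Hab. now apply sum_n_ext. Qed.

Lemma sum_n_Rmult_l (c : R) (a : nat -> R) N : sum_n (fun n => c * a n) N = c * sum_n a N.
Proof. exact (sum_n_mult_l (K := R_Ring) c a N). Qed.

Lemma sum_n_Rplus (a b : nat -> R) N : sum_n (fun n => a n + b n) N = sum_n a N + sum_n b N.
Proof. exact (sum_n_plus (G := R_AbelianMonoid) a b N). Qed.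

Lemma sum_n_m_Rmult_l (c : R) (a : nat -> R) n m :
  sum_n_m (fun j => c * a j) n m = c * sum_n_m a n m.
Proof. exact (sum_n_m_mult_l (K := R_Ring) c a n m). Qed.

Lemma is_derive_sum_n_R (f df : R -> nat -> R) N t :
  (forall n, is_derive (fun t => f t n) t (df t n)) ->
  is_derive (fun t => sum_n (f t) N) t (sum_n (df t) N).
Proof. intro Hf. exact (is_derive_sum_n (fun n t => f t n) N t (df t) (fun n _ => Hf n)). Qed.

Lemma is_derive_sum_n_scal (f g : R -> nat -> R) (c : R) N t :
  (forall n, is_derive (fun t => f t n) t (c * g t n)) ->
  is_derive (fun t => sum_n (f t) N) t (c * sum_n (g t) N).
Proof.
  intro Hf. rewrite <- sum_n_Rmult_l.
  exact (is_derive_sum_n_R f (fun t n => c * g t n) N t Hf).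
Qed.

Lemma is_derive_sum_n_m_1 (f : nat -> R -> R) (df : nat -> R) p x :
  (forall j, (1 <= j)%nat -> is_derive (f j) x (df j)) ->
  is_derive (fun x => sum_n_m (fun j => f j x) 1 p) x (sum_n_m df 1 p).
Proof.
  intro Hf. induction p as [|p IH].
  - rewrite sum_n_m_zero by lia.
    apply is_derive_ext_R with (fun _ => 0); [|apply is_derive_const_R].
    intro t. now rewrite sum_n_m_zero by lia.
  - rewrite sum_n_Sm by lia.
    apply is_derive_ext_R with (fun x => sum_n_m (fun j => f j x) 1 p + f (S p) x).
    { intro t. now rewrite sum_n_Sm by lia. }
    apply is_derive_Rplus; [exact IH | apply Hf; lia].
Qed.

Lemma Rabs_sin_sub_le a b : Rabs (sin a - sin b) <= Rabs (a - b).
Proof.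
  destruct (MVT_gen sin b a cos) as [c [_ ->]].
  - intros t _. apply is_derive_sin.
  - intros t _. apply continuity_sin.
  - rewrite Rabs_mult. rewrite <- (Rmult_1_l (Rabs (a - b))) at 2.
    apply Rmult_le_compat_r; [apply Rabs_pos | apply Rabs_le, COS_bound].
Qed.

Lemma is_lim_seq_inv_INR_plus c : 0 < c -> is_lim_seq (fun n => / (INR n + c)) 0.
Proof.
  intro Hc. replace (Finite 0) with (Rbar_inv p_infty) by reflexivity.
  apply is_lim_seq_inv; [|discriminate].
  eapply is_lim_seq_le_p_loc; [|exact is_lim_seq_INR].
  exists O. intros n _. lra.
Qed.

Lemma is_series_abs_le (a b : nat -> R) (la lb : R) :
  is_series a la -> is_series b lb -> (forall n, Rabs (a n) <= b n) -> Rabs la <= lb.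
Proof.
  intros Ha Hb Hab.
  assert (Habs : ex_series (fun n => Rabs (a n))).
  { apply (ex_series_le (K := R_AbsRing) (V := R_CompleteNormedModule) _ b); [|now exists lb].
    intro n. rewrite (Rabs_pos_eq (Rabs _)) by apply Rabs_pos. apply Hab. }
  rewrite <- (is_series_unique _ _ Ha), <- (is_series_unique _ _ Hb).
  eapply Rle_trans; [now apply Series_Rabs|].
  apply Series_le; [|now exists lb]. intro n. split; [apply Rabs_pos | apply Hab].
Qed.

Lemma is_series_tail_abs_le (a b : nat -> R) (la lb : R) N :
  is_series a la -> is_series b lb -> (forall n, Rabs (a n) <= b n) ->
  Rabs (la - sum_n a N) <= lb - sum_n b N.
Proof.
  intros Ha Hb Hab.
  apply (is_series_abs_le (fun k => a (S N + k)%nat) (fun k => b (S N + k)%nat)).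
  - apply is_series_incr_n; [lia|]. simpl pred.
    change (plus ?x ?y) with (x + y). now rewrite Rplus_comm, Rplus_minus.
  - apply is_series_incr_n; [lia|]. simpl pred.
    change (plus ?x ?y) with (x + y). now rewrite Rplus_comm, Rplus_minus.
  - intro n. apply Hab.
Qed.

Lemma Series_eq_0 (a : nat -> R) : (forall n, a n = 0) -> Series a = 0.
Proof.
  intro Ha. rewrite (Series_ext _ (fun n => 0 * a n)), Series_scal_l; [ring|].
  intro n. rewrite Ha. ring.
Qed.

Section DerivativeLimit.

Variables (f : R -> R) (fn dfn : nat -> R -> R) (T : nat -> R) (K a b : R).
Hypotheses (fn_derive : forall n t, a < t < b -> is_derive (fn n) t (dfn n t))
  (dfn_close : forall n t, a < t < b -> Rabs (dfn n t - K) <= T n)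
  (T_lim : is_lim_seq T 0)
  (fn_lim : forall t, a < t < b -> is_lim_seq (fun n => fn n t) (f t)).

Lemma fn_increment_close n x y : a < x < b -> a < y < b ->
  Rabs (fn n x - fn n y - K * (x - y)) <= T n * Rabs (x - y).
Proof.
  intros Hx Hy.
  assert (Hin : forall t, Rmin y x <= t <= Rmax y x -> a < t < b).
  { intros t [H1 H2]. split.
    - apply Rlt_le_trans with (Rmin y x); [apply Rmin_glb_lt|]; lra.
    - apply Rle_lt_trans with (Rmax y x); [|apply Rmax_lub_lt]; lra. }
  destruct (MVT_gen (fn n) y x (dfn n)) as [c [Hc ->]].
  - intros t Ht. apply fn_derive, Hin. lra.
  - intros t Ht. eapply continuity_pt_of_is_derive, fn_derive, Hin, Ht.
  - replace (dfn n c * (x - y) - K * (x - y)) with ((dfn n c - K) * (x - y)) by ring.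
    rewrite Rabs_mult. apply Rmult_le_compat_r; [apply Rabs_pos | apply dfn_close, Hin, Hc].
Qed.

Lemma limit_has_slope x y : a < x < b -> a < y < b -> f x - f y = K * (x - y).
Proof.
  intros Hx Hy.
  assert (Hlim : is_lim_seq (fun n => fn n x - fn n y - K * (x - y)) (f x - f y - K * (x - y))).
  { apply is_lim_seq_minus'; [apply is_lim_seq_minus'; auto | apply is_lim_seq_const]. }
  assert (Hbound : is_lim_seq (fun n => T n * Rabs (x - y)) 0).
  { replace (Finite 0) with (Finite (0 * Rabs (x - y))) by (f_equal; ring).
    apply is_lim_seq_mult'; [exact T_lim | apply is_lim_seq_const]. }
  assert (Hzero : is_lim_seq (fun n => fn n x - fn n y - K * (x - y)) 0).
  { apply is_lim_seq_abs_0.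
    apply (is_lim_seq_le_le _ _ _ 0 (fun n => conj (Rabs_pos _) (fn_increment_close n x y Hx Hy)));
      [apply is_lim_seq_const | exact Hbound]. }
  apply is_lim_seq_unique in Hlim, Hzero. rewrite Hlim in Hzero.
  injection Hzero. lra.
Qed.

End DerivativeLimit.

Lemma continuity_pt_eq_0_of_lim (f : R -> R) (u : nat -> R) (l : R) :
  continuity_pt f l -> is_lim_seq u l -> (forall n, f (u n) = 0) -> f l = 0.
Proof.
  intros Hf Hu H0. pose proof (is_lim_seq_continuous f u l Hf Hu) as Hlim.
  apply is_lim_seq_unique in Hlim.
  rewrite (Lim_seq_ext _ (fun _ => 0) H0), Lim_seq_const in Hlim.
  now injection Hlim.
Qed.

Lemma continuity_pt_eq_0_at_ends (f : R -> R) a b : a < b ->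
  (forall t, a < t < b -> f t = 0) -> continuity_pt f a -> continuity_pt f b ->
  f a = 0 /\ f b = 0.
Proof.
  intros Hab Hf Ha Hb.
  set (d n := (b - a) / 2 * / (INR n + 1)).
  assert (Hd : is_lim_seq d 0).
  { replace (Finite 0) with (Finite ((b - a) / 2 * 0)) by (f_equal; ring).
    apply is_lim_seq_mult'; [apply is_lim_seq_const | apply is_lim_seq_inv_INR_plus; lra]. }
  assert (Hd_range : forall n, 0 < d n < b - a).
  { intro n. pose proof (pos_INR n). unfold d.
    assert (0 < / (INR n + 1) <= 1).
    { split; [apply Rinv_0_lt_compat; lra|].
      rewrite <- Rinv_1. apply Rinv_le_contravar; lra. }
    split; [apply Rmult_lt_0_compat|]; nra. }
  split.
  - apply (continuity_pt_eq_0_of_lim f (fun n => a + d n)); [exact Ha| |].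
    + replace (Finite a) with (Finite (a + 0)) by (f_equal; ring).
      apply is_lim_seq_plus'; [apply is_lim_seq_const | exact Hd].
    + intro n. specialize (Hd_range n). apply Hf. lra.
  - apply (continuity_pt_eq_0_of_lim f (fun n => b - d n)); [exact Hb| |].
    + replace (Finite b) with (Finite (b - 0)) by (f_equal; ring).
      apply is_lim_seq_minus'; [apply is_lim_seq_const | exact Hd].
    + intro n. specialize (Hd_range n). apply Hf. lra.
Qed.

Lemma affine_vanishing_at_ends (D : R -> R) (alpha beta a b : R) : a < b ->
  continuity_pt D a -> continuity_pt D b -> D a = 0 -> D b = 0 ->
  (forall t, a < t < b -> D t = alpha * t + beta) -> alpha = 0 /\ beta = 0.
Proof.
  intros Hab Ha Hb Da Db HD.
  assert (Hline : forall t, continuity_pt (fun t => alpha * t + beta) t).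
  { intro t. apply (continuity_pt_of_is_derive _ _ alpha). auto_derive; [exact I | ring]. }
  destruct (continuity_pt_eq_0_at_ends (fun t => D t - (alpha * t + beta)) a b Hab)
    as [Ea Eb].
  - intros t Ht. rewrite HD by exact Ht. ring.
  - now apply continuity_pt_minus.
  - now apply continuity_pt_minus.
  - rewrite Da in Ea. rewrite Db in Eb.
    assert (alpha = 0) by (apply Rmult_eq_reg_r with (b - a); nra).
    split; [assumption | nra].
Qed.

Lemma CV_radius_ge_of_ex_pseries a x : ex_pseries a x -> Rbar_le (Rabs x) (CV_radius a).
Proof.
  intro Hex. apply Rbar_not_lt_le; intro Hlt.
  apply (CV_disk_outside a x Hlt).
  eapply is_lim_seq_ext; [|exact (ex_series_lim_0 _ Hex)].
  intro n; simpl; rewrite pow_n_pow. apply Rmult_comm.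
Qed.

Lemma CV_radius_ge_of_bound a : (forall n, Rabs (a n) <= 2 ^ n) -> Rbar_le (1 / 2) (CV_radius a).
Proof.
  intro Ha. apply (proj1 (CV_radius_bounded a)). exists 1; intro n.
  rewrite Rabs_mult, <- RPow_abs, (Rabs_pos_eq (1 / 2)) by lra.
  apply Rle_trans with (2 ^ n * (1 / 2) ^ n).
  - apply Rmult_le_compat_r; [apply pow_le; lra | apply Ha].
  - rewrite <- Rpow_mult_distr. replace (2 * (1 / 2)) with 1 by field.
    rewrite pow1; lra.
Qed.

Lemma PSeries_coef_unique a b n :
  Rbar_lt 0 (CV_radius a) -> Rbar_lt 0 (CV_radius b) ->
  locally 0 (fun t => PSeries a t = PSeries b t) -> a n = b n.
Proof.
  intros Ha Hb Hab.
  pose proof (Derive_n_ext_loc _ _ n 0 Hab) as E.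
  rewrite !Derive_n_coef in E by assumption.
  apply Rmult_eq_reg_r in E; [exact E | apply INR_fact_neq_0].
Qed.

(** * Bernoulli numbers and polynomials *)

(* [bernoulli_table n k] is the Bernoulli number B_k for k <= n: the table
   realises the course-of-values recursion sum_(i <= m+1) B_i / (m+2-i)! = 0. *)
Fixpoint bernoulli_table (n : nat) : nat -> R :=
  match n with
  | O => fun _ => 1
  | S m => fun k =>
      if (k <=? m)%nat then bernoulli_table m k
      else - sum_f_R0 (fun i => bernoulli_table m i / INR (fact (S (S m) - i))) m
  end.

Definition bernoulli_number (n : nat) : R := bernoulli_table n n.

Lemma bernoulli_table_stable n k : (k <= n)%nat -> bernoulli_table n k = bernoulli_number k.
Proof.
  induction n as [|n IH]; intro Hk.
  - now replace k with 0%nat by lia.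
  - destruct (Nat.leb_spec k n) as [Hkn|Hkn].
    + simpl. rewrite (proj2 (Nat.leb_le k n) Hkn). now apply IH.
    + now replace k with (S n) by lia.
Qed.

Lemma bernoulli_number_rec m :
  bernoulli_number (S m)
  = - sum_f_R0 (fun i => bernoulli_number i / INR (fact (S (S m) - i))) m.
Proof.
  unfold bernoulli_number at 1; cbn [bernoulli_table].
  rewrite (proj2 (Nat.leb_gt (S m) m)) by lia. f_equal.
  apply sum_eq; intros i Hi. now rewrite bernoulli_table_stable by lia.
Qed.

Lemma bernoulli_number_0 : bernoulli_number 0 = 1.
Proof. reflexivity. Qed.

Lemma bernoulli_number_1 : bernoulli_number 1 = - (1 / 2).
Proof. unfold bernoulli_number; simpl. field. Qed.

Lemma bernoulli_number_bound n : Rabs (bernoulli_number n) <= 2 ^ n.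
Proof.
  induction n as [[|m] IH] using (well_founded_induction Wf_nat.lt_wf).
  { rewrite bernoulli_number_0, Rabs_R1. simpl; lra. }
  rewrite bernoulli_number_rec, Rabs_Ropp.
  apply Rle_trans with (sum_f_R0 (fun i => 2 ^ i) m).
  - eapply Rle_trans; [apply sum_f_R0_triangle|].
    apply sum_Rle; intros i Hi.
    assert (Hfact : 1 <= INR (fact (S (S m) - i))) by apply (le_INR 1), lt_O_fact.
    unfold Rdiv; rewrite Rabs_mult, Rabs_inv, (Rabs_pos_eq (INR _)) by apply pos_INR.
    assert (0 < / INR (fact (S (S m) - i)) <= 1).
    { split; [apply Rinv_0_lt_compat; lra|].
      rewrite <- Rinv_1; apply Rinv_le_contravar; lra. }
    pose proof (IH i ltac:(lia)); pose proof (Rabs_pos (bernoulli_number i)). nra.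
  - clear IH; induction m as [|m IHm]; [simpl; lra|].
    rewrite tech5; simpl in *; lra.
Qed.

Definition expm1_div_coef (n : nat) : R := / INR (fact (S n)).

Definition exp_coef (y : R) (n : nat) : R := y ^ n / INR (fact n).

Lemma PS_mult_bernoulli_expm1_div n :
  PS_mult bernoulli_number expm1_div_coef n = if (n =? 0)%nat then 1 else 0.
Proof.
  destruct n as [|m]; unfold PS_mult, expm1_div_coef.
  - simpl. rewrite bernoulli_number_0. field.
  - rewrite tech5, Nat.sub_diag, bernoulli_number_rec; simpl (Nat.eqb _ _).
    rewrite (sum_eq _ (fun i => bernoulli_number i / INR (fact (S (S m) - i)))).
    + simpl; lra.
    + intros i Hi. unfold Rdiv. do 4 f_equal. lia.
Qed.

Lemma is_pseries_exp_coef y t : is_pseries (exp_coef y) t (exp (y * t)).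
Proof.
  eapply is_series_ext; [|apply (is_exp_Reals (y * t))].
  intro n; simpl; rewrite !pow_n_pow; unfold exp_coef.
  change ((y * t) ^ n * / INR (fact n) = t ^ n * (y ^ n / INR (fact n))).
  rewrite Rpow_mult_distr; unfold Rdiv; ring.
Qed.

Lemma is_pseries_expm1_div t : t <> 0 -> is_pseries expm1_div_coef t ((exp t - 1) / t).
Proof.
  intro Ht.
  assert (Hexp1 : is_series (fun k => scal (pow_n t (S k)) (/ INR (fact (S k)))) (exp t - 1)).
  { apply (is_series_incr_1 (fun k => scal (pow_n t k) (/ INR (fact k)))).
    replace (plus (exp t - 1) _) with (exp t); [apply is_exp_Reals|].
    change (exp t = exp t - 1 + 1 * / 1). field. }
  apply (is_series_scal (/ t)) in Hexp1.
  replace ((exp t - 1) / t) with (scal (/ t) (exp t - 1))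
    by (change (/ t * (exp t - 1) = (exp t - 1) / t); field; auto).
  eapply is_series_ext; [|exact Hexp1]; intro n.
  unfold expm1_div_coef; rewrite !pow_n_pow.
  change (/ t * (t * t ^ n * / INR (fact (S n))) = t ^ n * / INR (fact (S n))).
  field; split; [apply INR_fact_neq_0 | exact Ht].
Qed.

Lemma CV_radius_bernoulli_number t :
  Rabs t < 1 / 2 -> Rbar_lt (Rabs t) (CV_radius bernoulli_number).
Proof.
  intro Ht. apply (Rbar_lt_le_trans (Rabs t) (Finite _) _ Ht).
  apply CV_radius_ge_of_bound, bernoulli_number_bound.
Qed.

Lemma CV_radius_exp_coef y t : Rabs t < 1 -> Rbar_lt (Rabs t) (CV_radius (exp_coef y)).
Proof.
  intro Ht. apply (Rbar_lt_le_trans (Rabs t) (Finite _) _ Ht).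
  rewrite <- Rabs_R1. apply CV_radius_ge_of_ex_pseries.
  eexists; apply is_pseries_exp_coef.
Qed.

Lemma CV_radius_expm1_div t : Rabs t < 1 -> Rbar_lt (Rabs t) (CV_radius expm1_div_coef).
Proof.
  intro Ht. apply (Rbar_lt_le_trans (Rabs t) (Finite _) _ Ht).
  rewrite <- Rabs_R1. apply CV_radius_ge_of_ex_pseries.
  eexists; apply is_pseries_expm1_div, R1_neq_R0.
Qed.

Lemma exp_minus_1_neq_0 t : t <> 0 -> exp t - 1 <> 0.
Proof. intros Ht E. apply Ht, exp_inv. rewrite exp_0. lra. Qed.

Lemma PSeries_bernoulli_number t :
  Rabs t < 1 / 2 -> t <> 0 -> PSeries bernoulli_number t = t / (exp t - 1).
Proof.
  intros Ht Ht0.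
  pose proof (PSeries_mult bernoulli_number expm1_div_coef t
    (CV_radius_bernoulli_number t Ht) (CV_radius_expm1_div t ltac:(lra))) as Hprod.
  assert (Hone : PSeries (PS_mult bernoulli_number expm1_div_coef) t = 1).
  { apply is_pseries_unique, is_series_lim_seq.
    apply (is_lim_seq_ext (fun _ => 1)); [|apply is_lim_seq_const].
    intro n; symmetry; induction n as [|n IH].
    - rewrite sum_O, PS_mult_bernoulli_expm1_div. change (1 * 1 = 1). ring.
    - rewrite sum_Sn, IH, PS_mult_bernoulli_expm1_div. change (1 + pow_n t (S n) * 0 = 1). ring. }
  rewrite Hone, (is_pseries_unique _ _ _ (is_pseries_expm1_div t Ht0)) in Hprod.
  pose proof (exp_minus_1_neq_0 t Ht0).
  apply Rmult_eq_reg_r with ((exp t - 1) / t).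
  - rewrite <- Hprod. field; auto.
  - unfold Rdiv. apply Rmult_integral_contrapositive_currified; auto.
    now apply Rinv_neq_0_compat.
Qed.

Definition bernoulli_coef (y : R) : nat -> R := PS_mult bernoulli_number (exp_coef y).

Lemma bernoulli_gf_PSeries y t :
  Rabs t < 1 / 2 -> bernoulli_gf y t = PSeries (bernoulli_coef y) t.
Proof.
  intro Ht. unfold bernoulli_gf, bernoulli_coef.
  destruct (Req_EM_T t 0) as [->|Ht0].
  - rewrite PSeries_0. unfold PS_mult, exp_coef; simpl.
    rewrite bernoulli_number_0. field.
  - rewrite PSeries_mult.
    + rewrite PSeries_bernoulli_number, (is_pseries_unique _ _ _ (is_pseries_exp_coef y t)) by auto.
      field. now apply exp_minus_1_neq_0.
    + now apply CV_radius_bernoulli_number.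
    + apply CV_radius_exp_coef; lra.
Qed.

Lemma CV_radius_bernoulli_coef y : Rbar_lt 0 (CV_radius (bernoulli_coef y)).
Proof.
  apply (Rbar_lt_le_trans _ (Rabs (1 / 4))).
  - rewrite Rabs_pos_eq by lra. simpl; lra.
  - apply CV_radius_ge_of_ex_pseries, ex_pseries_mult.
    + apply CV_radius_bernoulli_number. rewrite Rabs_pos_eq; lra.
    + apply CV_radius_exp_coef. rewrite Rabs_pos_eq; lra.
Qed.

Lemma Bernoulli_coefE n y : Bernoulli n y = INR (fact n) * bernoulli_coef y n.
Proof.
  unfold Bernoulli. rewrite (Derive_n_ext_loc _ (PSeries (bernoulli_coef y))).
  - rewrite Derive_n_coef by apply CV_radius_bernoulli_coef. ring.
  - exists (mkposreal (1 / 2) ltac:(lra)); intros t Ht.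
    apply bernoulli_gf_PSeries. now rewrite <- (Rminus_0_r t).
Qed.

Lemma is_derive_exp_coef m y : is_derive (fun y => exp_coef y (S m)) y (exp_coef y m).
Proof.
  unfold exp_coef. rewrite fact_simpl, mult_INR.
  pose proof (INR_fact_neq_0 m). pose proof (not_0_INR (S m) (Nat.neq_succ_0 m)).
  auto_derive; auto.
  change (1 * (INR (S m) * y ^ m) * / (INR (S m) * INR (fact m)) = y ^ m / INR (fact m)).
  field; auto.
Qed.

Lemma is_derive_bernoulli_coef n y :
  is_derive (fun y => bernoulli_coef y (S n)) y (bernoulli_coef y n).
Proof.
  unfold bernoulli_coef, PS_mult.
  apply is_derive_ext_R with
    (fun y => sum_n (fun k => bernoulli_number k * exp_coef y (S n - k)) n
              + bernoulli_number (S n)).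
  { intro t. rewrite tech5, Nat.sub_diag, <- sum_n_Reals.
    replace (exp_coef t 0) with 1 by (unfold exp_coef; simpl; field).
    ring. }
  rewrite <- sum_n_Reals, <- (Rplus_0_r (sum_n _ n)).
  apply (is_derive_plus _ (fun _ => bernoulli_number (S n))); [|apply is_derive_const_R].
  apply (is_derive_sum_n (fun k y => bernoulli_number k * exp_coef y (S n - k))).
  intros k Hk.
  apply (is_derive_scal (fun y => exp_coef y (S n - k))).
  replace (S n - k)%nat with (S (n - k)) by lia.
  apply is_derive_exp_coef.
Qed.

Lemma is_derive_Bernoulli n y : is_derive (Bernoulli (S n)) y (INR (S n) * Bernoulli n y).
Proof.
  apply is_derive_ext with (fun y => INR (fact (S n)) * bernoulli_coef y (S n)).
  { intro t. symmetry. apply Bernoulli_coefE. }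
  eapply is_derive_eq_R; [apply is_derive_scal, is_derive_bernoulli_coef|].
  rewrite Bernoulli_coefE, fact_simpl, mult_INR. apply Rmult_assoc.
Qed.

Lemma Bernoulli_1 y : Bernoulli 1 y = y - 1 / 2.
Proof.
  rewrite Bernoulli_coefE. unfold bernoulli_coef, PS_mult, exp_coef; simpl.
  rewrite bernoulli_number_0, bernoulli_number_1. field.
Qed.

Lemma is_pseries_indicator_1 t : is_pseries (fun n => if (n =? 1)%nat then 1 else 0) t t.
Proof.
  apply is_series_lim_seq, is_lim_seq_incr_1.
  apply (is_lim_seq_ext (fun _ => t)); [|apply is_lim_seq_const].
  intro n; symmetry; induction n as [|n IH].
  - rewrite sum_Sn, sum_O. change (1 * 0 + t * 1 * 1 = t). ring.
  - rewrite sum_Sn, IH. change (t + pow_n t (S (S n)) * 0 = t). ring.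
Qed.

Lemma PSeries_bernoulli_number_opp t :
  Rabs t < 1 / 2 -> PSeries bernoulli_number (- t) = PSeries bernoulli_number t + t.
Proof.
  intro Ht. destruct (Req_EM_T t 0) as [->|Ht0].
  { rewrite Ropp_0, PSeries_0. ring. }
  rewrite !PSeries_bernoulli_number, exp_Ropp; auto; [|now rewrite Rabs_Ropp | lra].
  pose proof (exp_minus_1_neq_0 t Ht0). pose proof (exp_minus_1_neq_0 (- t) ltac:(lra)).
  rewrite exp_Ropp in *. pose proof (exp_pos t).
  field. split; lra.
Qed.

Lemma bernoulli_number_odd j : bernoulli_number (2 * j + 3) = 0.
Proof.
  set (a n := (-1) ^ n * bernoulli_number n).
  set (b := PS_plus bernoulli_number (fun n => if (n =? 1)%nat then 1 else 0)).
  assert (Hab : a (2 * j + 3)%nat = b (2 * j + 3)%nat).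
  { apply PSeries_coef_unique.
    - apply (Rbar_lt_le_trans _ (1 / 2)); [simpl; lra|].
      apply CV_radius_ge_of_bound; intro n. unfold a.
      rewrite Rabs_mult, pow_1_abs, Rmult_1_l. apply bernoulli_number_bound.
    - apply (Rbar_lt_le_trans _ (1 / 2)); [simpl; lra|].
      apply CV_radius_ge_of_bound; intro n. unfold b, PS_plus.
      destruct (Nat.eqb_spec n 1) as [->|]; change (plus ?x ?y) with (x + y).
      + rewrite bernoulli_number_1, Rabs_pos_eq; simpl; lra.
      + rewrite Rplus_0_r. apply bernoulli_number_bound.
    - exists (mkposreal (1 / 2) ltac:(lra)); intros t Ht.
      assert (Ht' : Rabs t < 1 / 2) by now rewrite <- (Rminus_0_r t).
      transitivity (PSeries bernoulli_number (- t)).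
      + apply Series_ext; intro n. unfold a.
        replace (- t) with (-1 * t) by ring. rewrite Rpow_mult_distr. ring.
      + rewrite PSeries_bernoulli_number_opp by exact Ht'. unfold b.
        rewrite PSeries_plus.
        * now rewrite (is_pseries_unique _ _ _ (is_pseries_indicator_1 t)).
        * now apply CV_radius_inside, CV_radius_bernoulli_number.
        * eexists; apply is_pseries_indicator_1. }
  unfold a, b, PS_plus in Hab.
  replace (2 * j + 3)%nat with (S (2 * S j)) in Hab |- * by lia.
  rewrite pow_1_odd in Hab. simpl Nat.eqb in Hab.
  change (plus ?x ?y) with (x + y) in Hab. lra.
Qed.

Lemma bernoulli_coef_0 n : bernoulli_coef 0 n = bernoulli_number n.
Proof.
  unfold bernoulli_coef, PS_mult. destruct n as [|m].
  - unfold exp_coef; simpl. field.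
  - rewrite tech5, Nat.sub_diag, sum_eq_R0.
    + unfold exp_coef; simpl. field.
    + intros k Hk. unfold exp_coef. rewrite pow_i by lia. unfold Rdiv; ring.
Qed.

(* At y = 1 the Cauchy product is the one of [PS_mult_bernoulli_expm1_div],
   shifted by the term B_(m+2)/0!. *)
Lemma bernoulli_coef_1 m : bernoulli_coef 1 (S (S m)) = bernoulli_number (S (S m)).
Proof.
  pose proof (PS_mult_bernoulli_expm1_div (S m)) as H. simpl Nat.eqb in H.
  unfold bernoulli_coef, PS_mult in *. rewrite tech5, Nat.sub_diag.
  rewrite (sum_eq _ (fun k => bernoulli_number k * expm1_div_coef (S m - k))), H.
  - unfold exp_coef; simpl. field.
  - intros k Hk. unfold exp_coef, expm1_div_coef. rewrite pow1.
    replace (S (S m) - k)%nat with (S (S m - k)) by lia. unfold Rdiv; ring.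
Qed.

Lemma Bernoulli_odd_0 j : (1 <= j)%nat -> Bernoulli (2 * j + 1) 0 = 0.
Proof.
  intro Hj. replace (2 * j + 1)%nat with (2 * (j - 1) + 3)%nat by lia.
  now rewrite Bernoulli_coefE, bernoulli_coef_0, bernoulli_number_odd, Rmult_0_r.
Qed.

Lemma Bernoulli_odd_1 j : (1 <= j)%nat -> Bernoulli (2 * j + 1) 1 = 0.
Proof.
  intro Hj. replace (2 * j + 1)%nat with (S (S (2 * j - 1))) by lia.
  rewrite Bernoulli_coefE, bernoulli_coef_1.
  replace (S (S (2 * j - 1))) with (2 * (j - 1) + 3)%nat by lia.
  now rewrite bernoulli_number_odd, Rmult_0_r.
Qed.

(** * The closed forms *)

Definition even_term (j : nat) (x : R) : R :=
  (-1) ^ (j + 1) * PI ^ (2 * j) / INR (fact (2 * j)) * Bernoulli (2 * j) (x / (2 * PI)).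

Definition odd_term (j : nat) (x : R) : R :=
  (-1) ^ (j + 1) * PI ^ (2 * j + 1) / INR (fact (2 * j + 1))
  * Bernoulli (2 * j + 1) (x / (2 * PI)).

Definition cos_closed_form (p : nat) (x : R) : R :=
  1 / 2 - PI / 4 * sin (x / 2) - 1 / 2 * sum_n_m (fun j => even_term j x) 1 p.

Definition sin_closed_form (p : nat) (x : R) : R :=
  PI / 4 * cos (x / 2) - 1 / 4 * (PI - x) - 1 / 2 * sum_n_m (fun j => odd_term j x) 1 p.

Lemma is_derive_Bernoulli_rescaled n x :
  is_derive (fun x => Bernoulli (S n) (x / (2 * PI))) x
    (INR (S n) / (2 * PI) * Bernoulli n (x / (2 * PI))).
Proof.
  eapply is_derive_eq_R.
  - apply (is_derive_comp (Bernoulli (S n)) (fun x => x / (2 * PI))).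
    + apply is_derive_Bernoulli.
    + auto_derive; [exact I | reflexivity].
  - change (scal ?a ?b) with (a * b). field. apply PI_neq0.
Qed.

Lemma is_derive_odd_term j x : is_derive (odd_term j) x (/ 2 * even_term j x).
Proof.
  unfold odd_term, even_term. replace (2 * j + 1)%nat with (S (2 * j)) by lia.
  eapply is_derive_eq_R; [apply is_derive_scal, is_derive_Bernoulli_rescaled|].
  rewrite fact_simpl, mult_INR.
  pose proof (INR_fact_neq_0 (2 * j)). pose proof (not_0_INR (S (2 * j)) (Nat.neq_succ_0 _)).
  pose proof PI_neq0. simpl pow. field. auto.
Qed.

Lemma is_derive_even_term j x : is_derive (even_term (S j)) x (- / 2 * odd_term j x).
Proof.
  unfold odd_term, even_term.
  replace (2 * S j)%nat with (S (2 * j + 1)) by lia.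
  replace (S j + 1)%nat with (S (j + 1)) by lia.
  eapply is_derive_eq_R; [apply is_derive_scal, is_derive_Bernoulli_rescaled|].
  rewrite fact_simpl, mult_INR.
  pose proof (INR_fact_neq_0 (2 * j + 1)).
  pose proof (not_0_INR (S (2 * j + 1)) (Nat.neq_succ_0 _)).
  pose proof PI_neq0. simpl pow. field. auto.
Qed.

(* The term j = 0, left out of the sums, is the linear part of [sin_closed_form]. *)
Lemma odd_term_0 x : odd_term 0 x = (PI - x) / 2.
Proof.
  unfold odd_term. simpl (2 * 0 + 1)%nat. rewrite Bernoulli_1.
  simpl. field. apply PI_neq0.
Qed.

Lemma is_derive_sin_closed_form p x :
  is_derive (sin_closed_form p) x (cos_closed_form p x / 2).
Proof.
  unfold sin_closed_form, cos_closed_form. eapply is_derive_eq_R.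
  - apply (is_derive_Rminus (fun x => PI / 4 * cos (x / 2) - 1 / 4 * (PI - x))).
    + auto_derive; [exact I | reflexivity].
    + apply is_derive_scal, is_derive_sum_n_m_1. intros j _. apply is_derive_odd_term.
  - rewrite sum_n_m_Rmult_l. unfold Rdiv. field.
Qed.

Lemma is_derive_cos_closed_form p x :
  is_derive (cos_closed_form (S p)) x (- sin_closed_form p x / 2).
Proof.
  unfold sin_closed_form, cos_closed_form. eapply is_derive_eq_R.
  - apply (is_derive_Rminus (fun x => 1 / 2 - PI / 4 * sin (x / 2))).
    + auto_derive; [exact I | reflexivity].
    + apply is_derive_scal.
      apply (is_derive_sum_n_m_1 _ (fun j => - / 2 * odd_term (pred j) x)).
      intros [|j] Hj; [lia | apply is_derive_even_term].
  - rewrite sum_n_m_Rmult_l, <- (sum_n_m_S (fun j => odd_term (pred j) x)), sum_Sn_m by lia.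
    simpl pred. rewrite odd_term_0. change (plus ?a ?b) with (a + b). unfold Rdiv. field.
Qed.

Lemma sum_odd_term_at_ends p x :
  (forall j, (1 <= j)%nat -> Bernoulli (2 * j + 1) (x / (2 * PI)) = 0) ->
  sum_n_m (fun j => odd_term j x) 1 p = 0.
Proof.
  intro HB. rewrite (sum_n_m_ext_loc _ (fun _ => zero)), sum_n_m_const_zero; [reflexivity|].
  intros j Hj. unfold odd_term. rewrite HB by lia. apply Rmult_0_r.
Qed.

Lemma sin_closed_form_0 p : sin_closed_form p 0 = 0.
Proof.
  unfold sin_closed_form. rewrite sum_odd_term_at_ends.
  - rewrite Rdiv_0_l, cos_0. field.
  - intros j Hj. rewrite Rdiv_0_l. now apply Bernoulli_odd_0.
Qed.

Lemma sin_closed_form_2PI p : sin_closed_form p (2 * PI) = 0.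
Proof.
  pose proof PI_neq0.
  unfold sin_closed_form. rewrite sum_odd_term_at_ends.
  - replace (2 * PI / 2) with PI by field. rewrite cos_PI. field.
  - intros j Hj. replace (2 * PI / (2 * PI)) with 1 by (field; auto).
    now apply Bernoulli_odd_1.
Qed.

(** * The series and their majorant *)

Definition cos_term (p : nat) (x : R) (n : nat) : R :=
  cos (INR (S n) * x)
  / ((2 * INR (S n) - 1) * (2 * INR (S n)) ^ (2 * p) * (2 * INR (S n) + 1)).

Definition sin_term (p : nat) (x : R) (n : nat) : R :=
  sin (INR (S n) * x)
  / ((2 * INR (S n) - 1) * (2 * INR (S n)) ^ (2 * p + 1) * (2 * INR (S n) + 1)).

Definition majorant (n : nat) : R := / ((2 * INR (S n) - 1) * (2 * INR (S n) + 1)).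

Lemma INR_S_ge_1 n : 1 <= INR (S n).
Proof. rewrite S_INR. pose proof (pos_INR n). lra. Qed.

Lemma majorant_denom_pos n : 0 < (2 * INR (S n) - 1) * (2 * INR (S n) + 1).
Proof. pose proof (INR_S_ge_1 n). nra. Qed.

Lemma sum_n_majorant n : sum_n majorant n = 1 / 2 - / (4 * (INR n + 3 / 2)) :> R.
Proof.
  induction n as [|n IH].
  - rewrite sum_O. unfold majorant. simpl. field.
  - rewrite sum_Sn, IH. unfold majorant. change (plus ?x ?y) with (x + y).
    pose proof (pos_INR n). rewrite !S_INR. field. lra.
Qed.

Lemma is_series_majorant : is_series majorant (1 / 2).
Proof.
  apply is_series_lim_seq. eapply is_lim_seq_ext.
  { intro n. symmetry. apply sum_n_majorant. }
  replace (Finite (1 / 2)) with (Finite (1 / 2 - / 4 * 0)) by (f_equal; ring).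
  apply is_lim_seq_minus'; [apply is_lim_seq_const|].
  eapply is_lim_seq_ext; [intro n; symmetry; apply Rinv_mult|].
  apply is_lim_seq_mult'; [apply is_lim_seq_const | apply is_lim_seq_inv_INR_plus; lra].
Qed.

Lemma is_lim_seq_majorant_tail : is_lim_seq (fun N => 1 / 2 - sum_n majorant N) 0.
Proof.
  replace (Finite 0) with (Finite (1 / 2 - 1 / 2)) by (f_equal; ring).
  apply is_lim_seq_minus'; [apply is_lim_seq_const | exact is_series_majorant].
Qed.

Lemma denominator_ge n q :
  (2 * INR (S n) - 1) * (2 * INR (S n) + 1)
  <= (2 * INR (S n) - 1) * (2 * INR (S n)) ^ q * (2 * INR (S n) + 1).
Proof.
  pose proof (INR_S_ge_1 n). pose proof (majorant_denom_pos n).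
  assert (1 <= (2 * INR (S n)) ^ q) by (apply pow_R1_Rle; lra). nra.
Qed.

Lemma term_abs_le_majorant n q u : Rabs u <= 1 ->
  Rabs (u / ((2 * INR (S n) - 1) * (2 * INR (S n)) ^ q * (2 * INR (S n) + 1))) <= majorant n.
Proof.
  intro Hu. pose proof (majorant_denom_pos n). pose proof (denominator_ge n q).
  unfold Rdiv. rewrite Rabs_mult, Rabs_inv, (Rabs_pos_eq (_ * _ ^ q * _)) by lra.
  unfold majorant. set (d := _ * _ ^ q * _) in *.
  apply Rle_trans with (1 * / d).
  - apply Rmult_le_compat_r; [apply Rlt_le, Rinv_0_lt_compat; lra | exact Hu].
  - rewrite Rmult_1_l. apply Rinv_le_contravar; lra.
Qed.

Lemma cos_term_bound p x n : Rabs (cos_term p x n) <= majorant n.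
Proof. apply term_abs_le_majorant, Rabs_le, COS_bound. Qed.

Lemma sin_term_bound p x n : Rabs (sin_term p x n) <= majorant n.
Proof. apply term_abs_le_majorant, Rabs_le, SIN_bound. Qed.

Lemma ex_series_cos_term p x : ex_series (cos_term p x).
Proof.
  apply (ex_series_le (K := R_AbsRing) (V := R_CompleteNormedModule) _ majorant).
  - apply cos_term_bound.
  - eexists; apply is_series_majorant.
Qed.

Lemma ex_series_sin_term p x : ex_series (sin_term p x).
Proof.
  apply (ex_series_le (K := R_AbsRing) (V := R_CompleteNormedModule) _ majorant).
  - apply sin_term_bound.
  - eexists; apply is_series_majorant.
Qed.

Lemma sin_term_sub_bound p x y n :
  Rabs (sin_term p x n - sin_term p y n) <= Rabs (x - y) / 2 * majorant n.
Proof.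
  unfold sin_term, majorant. set (k := INR (S n)).
  pose proof (INR_S_ge_1 n) as Hk. pose proof (majorant_denom_pos n) as Hm. fold k in Hk, Hm.
  pose proof (denominator_ge n (2 * p)) as Hd. fold k in Hd.
  replace (2 * p + 1)%nat with (S (2 * p)) by lia.
  change ((2 * k) ^ S (2 * p)) with (2 * k * (2 * k) ^ (2 * p)).
  set (P := (2 * k) ^ (2 * p)) in *.
  assert (HP : 1 <= P) by (apply pow_R1_Rle; lra).
  assert (Hsin : Rabs (sin (k * x) - sin (k * y)) <= k * Rabs (x - y)).
  { eapply Rle_trans; [apply Rabs_sin_sub_le|].
    replace (k * x - k * y) with (k * (x - y)) by ring.
    rewrite Rabs_mult, (Rabs_pos_eq k) by lra. lra. }
  replace (sin (k * x) / ((2 * k - 1) * (2 * k * P) * (2 * k + 1))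
           - sin (k * y) / ((2 * k - 1) * (2 * k * P) * (2 * k + 1)))
    with ((sin (k * x) - sin (k * y)) / (2 * k) / ((2 * k - 1) * P * (2 * k + 1)))
    by (field; repeat split; nra).
  unfold Rdiv.
  rewrite !Rabs_mult, !Rabs_inv, (Rabs_pos_eq (2 * k)), (Rabs_pos_eq (_ * P * _)) by lra.
  apply Rmult_le_compat; try (apply Rlt_le, Rinv_0_lt_compat; nra).
  - apply Rmult_le_pos; [apply Rabs_pos | apply Rlt_le, Rinv_0_lt_compat; lra].
  - apply Rmult_le_reg_r with (2 * k); [lra|].
    rewrite Rmult_assoc, Rinv_l by lra. nra.
  - apply Rinv_le_contravar; nra.
Qed.

Lemma Series_sin_term_lipschitz p x y :
  Rabs (Series (sin_term p x) - Series (sin_term p y)) <= Rabs (x - y) / 4.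
Proof.
  apply (is_series_abs_le (fun n => sin_term p x n - sin_term p y n)
                          (fun n => majorant n * (Rabs (x - y) / 2))).
  - apply (is_series_minus (sin_term p x) (sin_term p y)); apply Series_correct, ex_series_sin_term.
  - replace (Rabs (x - y) / 4) with (1 / 2 * (Rabs (x - y) / 2)) by field.
    apply is_series_scal_r, is_series_majorant.
  - intro n. rewrite Rmult_comm. apply sin_term_sub_bound.
Qed.

Lemma continuity_pt_Series_sin_term p t : continuity_pt (fun t => Series (sin_term p t)) t.
Proof.
  intros e He. exists e. split; [exact He|].
  intros y [_ Hy]. simpl in *. unfold R_dist in *.
  eapply Rle_lt_trans; [apply Series_sin_term_lipschitz|]. lra.
Qed.

Lemma Series_sin_term_0 p : Series (sin_term p 0) = 0.
Proof.
  apply Series_eq_0; intro n. unfold sin_term. rewrite Rmult_0_r, sin_0. apply Rdiv_0_l.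
Qed.

Lemma Series_sin_term_2PI p : Series (sin_term p (2 * PI)) = 0.
Proof.
  apply Series_eq_0; intro n. unfold sin_term.
  replace (INR (S n) * (2 * PI)) with (0 + 2 * INR (S n) * PI) by ring.
  rewrite sin_period, sin_0. apply Rdiv_0_l.
Qed.

Lemma is_derive_sin_term p n t :
  is_derive (fun t => sin_term p t n) t (/ 2 * cos_term p t n).
Proof.
  unfold sin_term, cos_term. set (k := INR (S n)).
  pose proof (INR_S_ge_1 n) as Hk. pose proof (majorant_denom_pos n) as Hm. fold k in Hk, Hm.
  assert (0 < (2 * k) ^ (2 * p)) by (apply pow_lt; lra).
  replace (2 * p + 1)%nat with (S (2 * p)) by lia.
  change ((2 * k) ^ S (2 * p)) with (2 * k * (2 * k) ^ (2 * p)).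
  set (P := (2 * k) ^ (2 * p)) in *.
  auto_derive; [exact I|]. field. repeat split; nra.
Qed.

Lemma is_derive_cos_term p n t :
  is_derive (fun t => cos_term (S p) t n) t (- / 2 * sin_term p t n).
Proof.
  unfold sin_term, cos_term. set (k := INR (S n)).
  pose proof (INR_S_ge_1 n) as Hk. pose proof (majorant_denom_pos n) as Hm. fold k in Hk, Hm.
  assert (0 < (2 * k) ^ (2 * p + 1)) by (apply pow_lt; lra).
  replace (2 * S p)%nat with (S (2 * p + 1)) by lia.
  change ((2 * k) ^ S (2 * p + 1)) with (2 * k * (2 * k) ^ (2 * p + 1)).
  set (P := (2 * k) ^ (2 * p + 1)) in *.
  auto_derive; [exact I|]. field. repeat split; nra.
Qed.

(** * Passing from one level to the next *)

Lemma half_partial_sum_close (a : nat -> R) (l : R) N :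
  is_series a l -> (forall n, Rabs (a n) <= majorant n) ->
  Rabs (/ 2 * sum_n a N - / 2 * l) <= 1 / 2 - sum_n majorant N.
Proof.
  intros Ha Hbound.
  pose proof (is_series_tail_abs_le a majorant l (1 / 2) N Ha is_series_majorant Hbound) as H.
  pose proof (Rabs_pos (l - sum_n a N)).
  replace (/ 2 * sum_n a N - / 2 * l) with (- / 2 * (l - sum_n a N)) by ring.
  rewrite Rabs_mult, Rabs_Ropp, Rabs_pos_eq by lra. lra.
Qed.

Definition sin_series_error (p : nat) (t : R) : R := Series (sin_term p t) - sin_closed_form p t.

Lemma continuity_pt_sin_series_error p t : continuity_pt (sin_series_error p) t.
Proof.
  apply continuity_pt_minus.
  - apply continuity_pt_Series_sin_term.
  - eapply continuity_pt_of_is_derive, is_derive_sin_closed_form.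
Qed.

Lemma sin_series_error_0 p : sin_series_error p 0 = 0.
Proof. unfold sin_series_error. rewrite Series_sin_term_0, sin_closed_form_0. ring. Qed.

Lemma sin_series_error_2PI p : sin_series_error p (2 * PI) = 0.
Proof. unfold sin_series_error. rewrite Series_sin_term_2PI, sin_closed_form_2PI. ring. Qed.

(* Both [Series (sin_term p)] and [sin_closed_form p] are antiderivatives of half
   their cosine counterparts, so their difference is affine on (0, 2 PI) with
   slope c/2; being continuous on R and zero at 0 and 2 PI, it vanishes. *)
Lemma sin_series_of_cos_series p c :
  (forall t, 0 < t < 2 * PI -> is_series (cos_term p t) (cos_closed_form p t + c)) ->
  c = 0 /\ forall t, 0 < t < 2 * PI -> is_series (sin_term p t) (sin_closed_form p t).
Proof.
  intro Hcos. pose proof PI_RGT_0.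
  set (D := sin_series_error p).
  assert (Hslope : forall x y, 0 < x < 2 * PI -> 0 < y < 2 * PI -> D x - D y = c / 2 * (x - y)).
  { apply (limit_has_slope D (fun n t => sum_n (sin_term p t) n - sin_closed_form p t)
      (fun n t => / 2 * sum_n (cos_term p t) n - cos_closed_form p t / 2)
      (fun n => 1 / 2 - sum_n majorant n)).
    - intros n t _. apply is_derive_Rminus.
      + apply is_derive_sum_n_scal. intro. apply is_derive_sin_term.
      + apply is_derive_sin_closed_form.
    - intros n t Ht.
      replace (/ 2 * sum_n (cos_term p t) n - cos_closed_form p t / 2 - c / 2)
        with (/ 2 * sum_n (cos_term p t) n - / 2 * (cos_closed_form p t + c)) by field.
      apply half_partial_sum_close; [now apply Hcos | apply cos_term_bound].
    - exact is_lim_seq_majorant_tail.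
    - intros t _. apply is_lim_seq_minus'; [|apply is_lim_seq_const].
      apply is_series_lim_seq, Series_correct, ex_series_sin_term. }
  assert (Haffine : forall t, 0 < t < 2 * PI -> D t = c / 2 * t + (D PI - c / 2 * PI)).
  { intros t Ht. pose proof (Hslope t PI Ht ltac:(lra)). lra. }
  destruct (affine_vanishing_at_ends D _ _ 0 (2 * PI) ltac:(lra)
              (continuity_pt_sin_series_error p 0) (continuity_pt_sin_series_error p (2 * PI))
              (sin_series_error_0 p) (sin_series_error_2PI p) Haffine) as [Hc HD].
  split; [lra|]. intros t Ht.
  replace (sin_closed_form p t) with (Series (sin_term p t)).
  - apply Series_correct, ex_series_sin_term.
  - pose proof (Haffine t Ht). unfold D, sin_series_error in *. rewrite Hc, HD in *. lra.
Qed.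

Lemma cos_series_of_sin_series p :
  (forall t, 0 < t < 2 * PI -> is_series (sin_term p t) (sin_closed_form p t)) ->
  exists c, forall t, 0 < t < 2 * PI ->
    is_series (cos_term (S p) t) (cos_closed_form (S p) t + c).
Proof.
  intro Hsin. pose proof PI_RGT_0.
  set (D t := Series (cos_term (S p) t) - cos_closed_form (S p) t).
  assert (Hslope : forall x y, 0 < x < 2 * PI -> 0 < y < 2 * PI -> D x - D y = 0 * (x - y)).
  { apply (limit_has_slope D (fun n t => sum_n (cos_term (S p) t) n - cos_closed_form (S p) t)
      (fun n t => - / 2 * sum_n (sin_term p t) n - - sin_closed_form p t / 2)
      (fun n => 1 / 2 - sum_n majorant n)).
    - intros n t _. apply is_derive_Rminus.
      + apply is_derive_sum_n_scal. intro. apply is_derive_cos_term.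
      + apply is_derive_cos_closed_form.
    - intros n t Ht.
      replace (- / 2 * sum_n (sin_term p t) n - - sin_closed_form p t / 2 - 0)
        with (- (/ 2 * sum_n (sin_term p t) n - / 2 * sin_closed_form p t)) by field.
      rewrite Rabs_Ropp. apply half_partial_sum_close; [now apply Hsin | apply sin_term_bound].
    - exact is_lim_seq_majorant_tail.
    - intros t _. apply is_lim_seq_minus'; [|apply is_lim_seq_const].
      apply is_series_lim_seq, Series_correct, ex_series_cos_term. }
  exists (D PI). intros t Ht.
  replace (cos_closed_form (S p) t + D PI) with (Series (cos_term (S p) t)).
  - apply Series_correct, ex_series_cos_term.
  - pose proof (Hslope t PI Ht ltac:(lra)). unfold D in *. lra.
Qed.

(** * The cosine series for p = 0 *)

Lemma sin_half_ge x c : 0 < x < 2 * PI -> Rmin PI x <= c <= Rmax PI x ->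
  sin (x / 2) <= sin (c / 2).
Proof.
  intros Hx Hc. pose proof PI_RGT_0.
  destruct (Rle_dec x PI).
  - rewrite Rmin_right, Rmax_left in Hc by lra. apply sin_incr_1; lra.
  - rewrite Rmin_left, Rmax_right in Hc by lra. apply sin_decr_1; lra.
Qed.

(* Variation of parameters for u'' + u/4 = - sin (h t) / (8 sin (t/2)), whose
   homogeneous solutions are sin (t/2) and cos (t/2): [wronskian_sin] is a first
   integral, and [wronskian_cos] drifts by O(1/h) away from t = 0, 2 PI. *)
Section VariationOfParameters.

Variables (u u' u'' : R -> R) (h : R).
Hypotheses (h_pos : 0 < h)
  (u_derive : forall t, is_derive u t (u' t)) (u'_derive : forall t, is_derive u' t (u'' t))
  (u_ode : forall t, 8 * sin (t / 2) * (u'' t + u t / 4) = - sin (h * t))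
  (u'_PI : u' PI = 0) (cos_h_PI : cos (h * PI) = 0).

Definition wronskian_sin (t : R) : R :=
  u' t * sin (t / 2) - u t / 2 * cos (t / 2) - cos (h * t) / (8 * h).

Definition wronskian_cos (t : R) : R :=
  u' t * cos (t / 2) + u t / 2 * sin (t / 2) - cos (h * t) / (8 * h) * (cos (t / 2) / sin (t / 2)).

Lemma is_derive_wronskian_sin t : is_derive wronskian_sin t 0.
Proof.
  unfold wronskian_sin. auto_derive.
  - repeat split; eexists; eauto.
  - replace (Derive (fun x => u x) t) with (u' t) by (symmetry; apply is_derive_unique, u_derive).
    replace (Derive (fun x => u' x) t) with (u'' t)
      by (symmetry; apply is_derive_unique, u'_derive).
    rewrite <- (Ropp_involutive (sin (h * t))), <- u_ode. unfold Rdiv. field. lra.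
Qed.

Lemma is_derive_wronskian_cos t : sin (t / 2) <> 0 ->
  is_derive wronskian_cos t (cos (h * t) / (16 * h * sin (t / 2) ^ 2)).
Proof.
  intro Hs. unfold wronskian_cos. auto_derive.
  - repeat split; try (eexists; eauto); unfold Rdiv; auto.
  - replace (Derive (fun x => u x) t) with (u' t) by (symmetry; apply is_derive_unique, u_derive).
    replace (Derive (fun x => u' x) t) with (u'' t)
      by (symmetry; apply is_derive_unique, u'_derive).
    pose proof (sin2_cos2 (t / 2)) as Hpyth. unfold Rsqr in Hpyth.
    pose proof (u_ode t) as Hode.
    unfold Rdiv in *. rewrite <- (Ropp_involutive (sin (h * t))), <- Hode.
    set (s := sin (t * / 2)) in *. set (c := cos (t * / 2)) in *.
    (* the derivative of the cotangent, rewritten with c^2 = 1 - s^2 *)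
    replace (c * (- (1 * / 2 * c) * / (s * s))) with (- / 2 * / (s * s) + / 2)
      by (field_simplify_eq; [lra | auto]).
    field. lra.
Qed.

Lemma wronskian_sin_eq_0 x : wronskian_sin x = 0.
Proof.
  assert (HPI : wronskian_sin PI = 0).
  { unfold wronskian_sin. rewrite u'_PI, cos_h_PI, cos_PI2. field. lra. }
  destruct (MVT_gen wronskian_sin PI x (fun _ => 0)) as [c [_ E]].
  - intros t _. apply is_derive_wronskian_sin.
  - intros t _. eapply continuity_pt_of_is_derive, is_derive_wronskian_sin.
  - lra.
Qed.

Lemma u_eq_wronskian_cos x : sin (x / 2) <> 0 -> u x = 2 * sin (x / 2) * wronskian_cos x.
Proof.
  intro Hs. pose proof (wronskian_sin_eq_0 x) as Hw. pose proof (sin2_cos2 (x / 2)) as Hpyth.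
  unfold wronskian_sin, wronskian_cos, Rsqr in *.
  set (s := sin (x / 2)) in Hs, Hw, Hpyth |- *. set (c := cos (x / 2)) in Hw, Hpyth |- *.
  replace (u x) with (u x * (s * s + c * c)) at 1 by (rewrite Hpyth; ring).
  apply Rminus_diag_uniq.
  replace (u x * (s * s + c * c)
           - 2 * s * (u' x * c + u x / 2 * s - cos (h * x) / (8 * h) * (c / s)))
    with (- 2 * c * (u' x * s - u x / 2 * c - cos (h * x) / (8 * h))) by (field; lra).
  rewrite Hw. ring.
Qed.

Lemma wronskian_cos_PI : wronskian_cos PI = u PI / 2.
Proof. unfold wronskian_cos. rewrite u'_PI, cos_h_PI, cos_PI2, sin_PI2. field. lra. Qed.

Lemma wronskian_cos_increment x : 0 < x < 2 * PI ->
  Rabs (wronskian_cos x - wronskian_cos PI) <= PI / (16 * h * sin (x / 2) ^ 2).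
Proof.
  intro Hx. pose proof PI_RGT_0.
  set (s := sin (x / 2)). assert (Hs : 0 < s) by (apply sin_gt_0; lra).
  assert (Hsc : forall c, Rmin PI x <= c <= Rmax PI x -> 0 < s <= sin (c / 2)).
  { intros c Hc. pose proof (sin_half_ge x c Hx Hc) as Hge. fold s in Hge. lra. }
  destruct (MVT_gen wronskian_cos PI x (fun t => cos (h * t) / (16 * h * sin (t / 2) ^ 2)))
    as [c [Hc ->]].
  - intros t Ht. apply is_derive_wronskian_cos. pose proof (Hsc t ltac:(lra)). lra.
  - intros t Ht. pose proof (Hsc t Ht).
    eapply continuity_pt_of_is_derive, is_derive_wronskian_cos. lra.
  - pose proof (Hsc c Hc) as [_ Hsc'].
    assert (Hsq : s ^ 2 <= sin (c / 2) ^ 2) by (apply pow_incr; lra).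
    assert (Hs2 : 0 < s ^ 2) by (apply pow_lt; lra).
    unfold Rdiv. rewrite !Rabs_mult, Rabs_inv, (Rabs_pos_eq (16 * h * _)) by nra.
    assert (Hcos : Rabs (cos (h * c)) <= 1) by apply Rabs_le, COS_bound.
    assert (Hdist : Rabs (x - PI) <= PI) by (apply Rabs_le; lra).
    assert (Hinv : / (16 * h * sin (c / 2) ^ 2) <= / (16 * h * s ^ 2))
      by (apply Rinv_le_contravar; nra).
    assert (0 < / (16 * h * sin (c / 2) ^ 2)) by (apply Rinv_0_lt_compat; nra).
    apply Rle_trans with (1 * / (16 * h * s ^ 2) * PI); [|right; field; lra].
    apply Rmult_le_compat; try apply Rabs_pos; [| |exact Hdist].
    + apply Rmult_le_pos; [apply Rabs_pos | lra].
    + apply Rmult_le_compat; try apply Rabs_pos; lra.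
Qed.

Lemma u_bound x : 0 < x < 2 * PI -> Rabs (u x) <= Rabs (u PI) + PI / (8 * sin (x / 2)) / h.
Proof.
  intro Hx. pose proof PI_RGT_0.
  set (s := sin (x / 2)). assert (Hs : 0 < s) by (apply sin_gt_0; lra).
  assert (Hs1 : s <= 1) by apply SIN_bound.
  pose proof (wronskian_cos_increment x Hx) as Hinc. fold s in Hinc.
  rewrite wronskian_cos_PI in Hinc.
  assert (Hw : Rabs (wronskian_cos x) <= Rabs (u PI) / 2 + PI / (16 * h * s ^ 2)).
  { replace (wronskian_cos x) with ((wronskian_cos x - u PI / 2) + u PI / 2) by ring.
    eapply Rle_trans; [apply Rabs_triang|].
    unfold Rdiv at 2. rewrite Rabs_mult, (Rabs_pos_eq (/ 2)) by lra. lra. }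
  rewrite u_eq_wronskian_cos by (fold s; lra). fold s.
  rewrite Rabs_mult, (Rabs_pos_eq (2 * s)) by lra.
  apply Rle_trans with (2 * s * (Rabs (u PI) / 2 + PI / (16 * h * s ^ 2))).
  - apply Rmult_le_compat_l; lra.
  - pose proof (Rabs_pos (u PI)).
    replace (2 * s * (Rabs (u PI) / 2 + PI / (16 * h * s ^ 2)))
      with (s * Rabs (u PI) + PI / (8 * s) / h) by (field; lra).
    nra.
Qed.

End VariationOfParameters.

(* The error of the N-th partial sum of the case p = 0 and its first two
   derivatives; by the Dirichlet kernel it solves the equation of the section
   above with h = N + 3/2. *)
Definition cos0_error (N : nat) (t : R) : R :=
  sum_n (cos_term 0 t) N - (1 / 2 - PI / 4 * sin (t / 2)).

Definition cos0_error_d1 (N : nat) (t : R) : R :=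
  sum_n (fun n => - INR (S n) * sin (INR (S n) * t) * majorant n) N + PI / 8 * cos (t / 2).

Definition cos0_error_d2 (N : nat) (t : R) : R :=
  sum_n (fun n => - INR (S n) ^ 2 * cos (INR (S n) * t) * majorant n) N - PI / 16 * sin (t / 2).

Lemma cos_term_0_eq t n : cos_term 0 t n = cos (INR (S n) * t) * majorant n.
Proof.
  unfold cos_term, majorant. change ((2 * INR (S n)) ^ (2 * 0)) with 1.
  now rewrite Rmult_1_r.
Qed.

Lemma is_derive_cos_mul k m t : is_derive (fun t => cos (k * t) * m) t (- k * sin (k * t) * m).
Proof. auto_derive; [exact I | ring]. Qed.

Lemma is_derive_sin_mul k m t :
  is_derive (fun t => - k * sin (k * t) * m) t (- k ^ 2 * cos (k * t) * m).
Proof. auto_derive; [exact I | ring]. Qed.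

Lemma is_derive_cos0_error N t : is_derive (cos0_error N) t (cos0_error_d1 N t).
Proof.
  unfold cos0_error, cos0_error_d1. eapply is_derive_eq_R.
  - apply is_derive_Rminus.
    + apply (is_derive_sum_n_R (cos_term 0)
               (fun t n => - INR (S n) * sin (INR (S n) * t) * majorant n)).
      intro n. apply is_derive_ext_R with (fun t => cos (INR (S n) * t) * majorant n).
      { intro. symmetry. apply cos_term_0_eq. }
      apply is_derive_cos_mul.
    + auto_derive; [exact I | reflexivity].
  - unfold Rdiv. field.
Qed.

Lemma is_derive_cos0_error_d1 N t : is_derive (cos0_error_d1 N) t (cos0_error_d2 N t).
Proof.
  unfold cos0_error_d1, cos0_error_d2. eapply is_derive_eq_R.
  - apply is_derive_Rplus.
    + apply (is_derive_sum_n_R (fun t n => - INR (S n) * sin (INR (S n) * t) * majorant n)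
               (fun t n => - INR (S n) ^ 2 * cos (INR (S n) * t) * majorant n)).
      intro n. apply is_derive_sin_mul.
    + auto_derive; [exact I | reflexivity].
  - unfold Rdiv. field.
Qed.

Lemma dirichlet_kernel N t :
  sin (t / 2) * (2 * sum_n (fun n => cos (INR (S n) * t)) N + 1) = sin ((INR N + 3 / 2) * t).
Proof.
  assert (Hprod : forall a b, 2 * sin a * cos b = sin (b + a) - sin (b - a)).
  { intros a b. rewrite sin_plus, sin_minus. ring. }
  induction N as [|N IH].
  - rewrite sum_O. replace (INR 1 * t) with t by (simpl; ring).
    replace (sin (t / 2) * (2 * cos t + 1)) with (2 * sin (t / 2) * cos t + sin (t / 2)) by ring.
    rewrite Hprod. replace (t - t / 2) with (t / 2) by field.
    replace (t + t / 2) with ((INR 0 + 3 / 2) * t) by (simpl; field). ring.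
  - rewrite sum_Sn. change (plus ?a ?b) with (a + b).
    replace (sin (t / 2)
             * (2 * (sum_n (fun n => cos (INR (S n) * t)) N + cos (INR (S (S N)) * t)) + 1))
      with (sin (t / 2) * (2 * sum_n (fun n => cos (INR (S n) * t)) N + 1)
            + 2 * sin (t / 2) * cos (INR (S (S N)) * t)) by ring.
    rewrite IH, Hprod, !S_INR.
    replace ((INR N + 1 + 1) * t - t / 2) with ((INR N + 3 / 2) * t) by field.
    replace ((INR N + 1 + 1) * t + t / 2) with ((INR N + 1 + 3 / 2) * t) by field. ring.
Qed.

Lemma cos0_error_ode N t :
  8 * sin (t / 2) * (cos0_error_d2 N t + cos0_error N t / 4) = - sin ((INR N + 3 / 2) * t).
Proof.
  rewrite <- dirichlet_kernel.
  assert (Hterms : sum_n (fun n => - INR (S n) ^ 2 * cos (INR (S n) * t) * majorant n) N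
                   + / 4 * sum_n (cos_term 0 t) N
                   = - / 4 * sum_n (fun n => cos (INR (S n) * t)) N).
  { rewrite <- !sum_n_Rmult_l, <- sum_n_Rplus. apply sum_n_ext_R. intro n.
    rewrite cos_term_0_eq. unfold majorant. pose proof (INR_S_ge_1 n). field. split; lra. }
  unfold cos0_error_d2, cos0_error.
  replace (sum_n (fun n => cos (INR (S n) * t)) N) with
    (- 4 * (sum_n (fun n => - INR (S n) ^ 2 * cos (INR (S n) * t) * majorant n) N
            + / 4 * sum_n (cos_term 0 t) N)) by (rewrite Hterms; field).
  field.
Qed.

Lemma sin_INR_S_PI n : sin (INR (S n) * PI) = 0.
Proof. apply sin_eq_0_1. exists (Z.of_nat (S n)). now rewrite <- INR_IZR_INZ. Qed.

Lemma cos_INR_S_PI n : cos (INR (S n) * PI) = (-1) ^ S n.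
Proof.
  induction n as [|n IH].
  - simpl. rewrite Rmult_1_l, cos_PI. ring.
  - rewrite (S_INR (S n)), Rmult_plus_distr_r, Rmult_1_l, neg_cos, IH. simpl. ring.
Qed.

Lemma cos_INR_plus_3_2_PI N : cos ((INR N + 3 / 2) * PI) = 0.
Proof.
  induction N as [|N IH].
  - replace ((INR 0 + 3 / 2) * PI) with (PI / 2 + PI) by (simpl; field).
    rewrite neg_cos, cos_PI2. ring.
  - replace ((INR (S N) + 3 / 2) * PI) with ((INR N + 3 / 2) * PI + PI) by (rewrite S_INR; ring).
    rewrite neg_cos, IH. ring.
Qed.

Lemma cos0_error_d1_PI N : cos0_error_d1 N PI = 0.
Proof.
  unfold cos0_error_d1. rewrite cos_PI2, (sum_n_ext_R _ (fun _ => 0 * 0)), sum_n_Rmult_l.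
  - ring.
  - intro n. rewrite sin_INR_S_PI. ring.
Qed.

Lemma cos_term_0_PI n : cos_term 0 PI n = (-1) ^ S n / ((2 * INR n + 1) * (2 * INR n + 3)).
Proof.
  rewrite cos_term_0_eq, cos_INR_S_PI. unfold majorant. rewrite S_INR.
  unfold Rdiv. do 3 f_equal; ring.
Qed.

Lemma sum_cos_term_0_PI N :
  sum_n (cos_term 0 PI) N
  = 1 / 2 * (1 - sum_f_R0 (tg_alt PI_tg) N - sum_f_R0 (tg_alt PI_tg) (S N)) :> R.
Proof.
  assert (Htg : forall n, tg_alt PI_tg n = (-1) ^ n / (2 * INR n + 1)).
  { intro n. unfold tg_alt, PI_tg. rewrite plus_INR, mult_INR. reflexivity. }
  induction N as [|N IH].
  - rewrite sum_O, cos_term_0_PI. simpl. rewrite !Htg. simpl. field.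
  - rewrite sum_Sn, IH, cos_term_0_PI. change (plus ?a ?b) with (a + b).
    rewrite (tech5 _ (S N)), (tech5 _ N), !Htg, !S_INR.
    pose proof (pos_INR N). simpl pow. field. lra.
Qed.

Lemma is_lim_seq_leibniz : is_lim_seq (fun N => sum_f_R0 (tg_alt PI_tg) N) (PI / 4).
Proof.
  apply is_lim_seq_Reals. rewrite <- Alt_PI_eq. unfold Alt_PI.
  destruct exist_PI as [l Hl]. now replace (4 * l / 4) with l by field.
Qed.

Lemma is_lim_seq_cos0_error_PI : is_lim_seq (fun N => cos0_error N PI) 0.
Proof.
  unfold cos0_error. eapply is_lim_seq_ext.
  { intro N. symmetry. now rewrite sum_cos_term_0_PI. }
  replace (Finite 0)
    with (Finite (1 / 2 * (1 - PI / 4 - PI / 4) - (1 / 2 - PI / 4 * sin (PI / 2))))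
    by (rewrite sin_PI2; f_equal; field).
  apply is_lim_seq_minus'; [|apply is_lim_seq_const].
  apply is_lim_seq_mult'; [apply is_lim_seq_const|].
  apply is_lim_seq_minus'.
  { apply is_lim_seq_minus'; [apply is_lim_seq_const | apply is_lim_seq_leibniz]. }
  apply (is_lim_seq_incr_1 (fun N => sum_f_R0 (tg_alt PI_tg) N)), is_lim_seq_leibniz.
Qed.

Lemma is_series_cos_term_0 x : 0 < x < 2 * PI -> is_series (cos_term 0 x) (cos_closed_form 0 x).
Proof.
  intro Hx.
  assert (Hbound : forall N, Rabs (cos0_error N x)
    <= Rabs (cos0_error N PI) + PI / (8 * sin (x / 2)) * / (INR N + 3 / 2)).
  { intro N. pose proof (pos_INR N).
    apply (u_bound (cos0_error N) (cos0_error_d1 N) (cos0_error_d2 N)); try lra.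
    - apply is_derive_cos0_error.
    - apply is_derive_cos0_error_d1.
    - apply cos0_error_ode.
    - apply cos0_error_d1_PI.
    - apply cos_INR_plus_3_2_PI. }
  assert (Hlim : is_lim_seq (fun N => cos0_error N x) 0).
  { apply is_lim_seq_abs_0.
    apply (is_lim_seq_le_le _ _ _ 0 (fun N => conj (Rabs_pos _) (Hbound N)));
      [apply is_lim_seq_const|].
    replace (Finite 0) with (Finite (Rabs 0 + PI / (8 * sin (x / 2)) * 0))
      by (rewrite Rabs_R0; f_equal; ring).
    apply is_lim_seq_plus'.
    - apply (is_lim_seq_abs _ 0), is_lim_seq_cos0_error_PI.
    - apply is_lim_seq_mult'; [apply is_lim_seq_const | apply is_lim_seq_inv_INR_plus; lra]. }
  apply is_series_lim_seq.
  apply (is_lim_seq_ext (fun N => cos0_error N x + (1 / 2 - PI / 4 * sin (x / 2)))).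
  { intro N. unfold cos0_error. ring. }
  replace (cos_closed_form 0 x) with (0 + (1 / 2 - PI / 4 * sin (x / 2))).
  - apply is_lim_seq_plus'; [exact Hlim | apply is_lim_seq_const].
  - unfold cos_closed_form. rewrite sum_n_m_zero by lia. change zero with 0. ring.
Qed.

Lemma is_series_cos_sin_term p x : 0 < x < 2 * PI ->
  is_series (cos_term p x) (cos_closed_form p x) /\ is_series (sin_term p x) (sin_closed_form p x).
Proof.
  revert x. induction p as [|p IH]; intros x Hx.
  - assert (Hcos : forall t, 0 < t < 2 * PI ->
                   is_series (cos_term 0 t) (cos_closed_form 0 t + 0)).
    { intros t Ht. rewrite Rplus_0_r. now apply is_series_cos_term_0. }
    destruct (sin_series_of_cos_series 0 0 Hcos) as [_ Hsin].
    split; [now apply is_series_cos_term_0 | now apply Hsin].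
  - destruct (cos_series_of_sin_series p (fun t Ht => proj2 (IH t Ht))) as [c Hcos].
    destruct (sin_series_of_cos_series (S p) c Hcos) as [-> Hsin].
    split; [rewrite <- (Rplus_0_r (cos_closed_form _ _)); now apply Hcos | now apply Hsin].
Qed.

Theorem corollary7 (p : nat) (x : R) (hx0 : 0 < x) (hx1 : x < 2 * PI) :
  is_series
    (fun n : nat => let k := INR (S n) in
       cos (k * x) / ((2 * k - 1) * (2 * k) ^ (2 * p) * (2 * k + 1)))
    (1 / 2 - PI / 4 * sin (x / 2)
     - 1 / 2 * sum_n_m (fun j : nat =>
          (-1) ^ (j + 1) * PI ^ (2 * j) / INR (fact (2 * j))
          * Bernoulli (2 * j) (x / (2 * PI))) 1 p)
  /\
  is_series
    (fun n : nat => let k := INR (S n) in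
       sin (k * x) / ((2 * k - 1) * (2 * k) ^ (2 * p + 1) * (2 * k + 1)))
    (PI / 4 * cos (x / 2) - 1 / 4 * (PI - x)
     - 1 / 2 * sum_n_m (fun j : nat =>
          (-1) ^ (j + 1) * PI ^ (2 * j + 1) / INR (fact (2 * j + 1))
          * Bernoulli (2 * j + 1) (x / (2 * PI))) 1 p).
Proof. exact (is_series_cos_sin_term p x (conj hx0 hx1)). Qed.
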